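(* Let $R$ be a finite Frobenius ring and $\mathcal P_{\rm hom}$ the partition of $R$ induced by the normalized homogeneous weight $\omega$. Then for every block $P$ of $\mathcal P_{\rm hom}$ and every $a\in R$, the sum $\sum_{b\in P}\chi(ab)$ is the same for all generating characters $\chi$ of $R$ (and is a real number). Consequently the right $\chi$-dual partition of $\mathcal P_{\rm hom}$ does not depend on the choice of the generating character $\chi$. *)

From HB Require Import structures.
From mathcomp Require Import all_boot all_order all_algebra all_field.
Set Implicit Arguments. Unset Strict Implicit. Unset Printing Implicit Defensive.
Import Order.TTheory GRing.Theory Num.Theory.
Local Open Scope ring_scope.

Definition is_additive_character (R : finNzRingType) (chi : R -> algC) : Prop :=
  chi 0 = 1 /\ forall x y : R, chi (x + y) = chi x * chi y.

Definition is_left_ideal (R : finNzRingType) (I : {set R}) : Prop :=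
  0 \in I /\ (forall x y, x \in I -> y \in I -> x + y \in I)
  /\ (forall x, x \in I -> - x \in I)
  /\ (forall r x, x \in I -> r * x \in I).

Definition char_ker (R : finNzRingType) (chi : R -> algC) : {set R} :=
  [set x | chi x == 1].

(* Generating character: a character whose kernel contains no nonzero
   left ideal (for finite rings equivalently no nonzero right ideal). *)
Definition generating_character (R : finNzRingType) (chi : R -> algC) : Prop :=
  is_additive_character chi /\
  forall I : {set R}, is_left_ideal I -> I \subset char_ker chi -> I = [set 0].

Definition frobenius_ring (R : finNzRingType) : Prop :=
  exists chi : R -> algC, generating_character chi.

Definition lprincipal (R : finNzRingType) (x : R) : {set R} :=
  [set r * x | r : R].

Definition normalized_homogeneous_weight (R : finNzRingType) (w : R -> rat) : Prop :=
  [/\ w 0 = 0,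
      (forall x y : R, lprincipal x = lprincipal y -> w x = w y)
    & (forall x : R, x != 0 ->
         \sum_(y in lprincipal x) w y = #|lprincipal x|%:R)].

(* A partition of R given by a labelling f : R -> T; its blocks are the
   nonempty fibres [set b | f b == f z]. The partition P_hom induced by
   the weight w is the partition into level sets of w (labelling w). *)

Definition right_dual_rel (R : finNzRingType) (T : eqType) (f : R -> T)
    (chi : R -> algC) (x y : R) : Prop :=
  forall z : R, \sum_(b : R | f b == f z) chi (x * b)
              = \sum_(b : R | f b == f z) chi (y * b).

From HB Require Import structures.
From mathcomp Require Import all_boot all_order all_algebra all_field.
Import Order.TTheory GRing.Theory Num.Theory.
Local Open Scope ring_scope.
Set Implicit Arguments. Unset Strict Implicit. Unset Printing Implicit Defensive.

(* The argument has three ingredients.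
   1. Character orthogonality: for a generating character chi and u != 0 we have
      sum_y chi (y * u) = 0 (the character y |-> chi (y * u) is nontrivial, since
      otherwise R u would lie in ker chi).  Viewing (chi (y * x))_{x,y} as a matrix,
      this says it is invertible, and the inverse relation gives the "right"
      orthogonality sum_y chi (u * y) = 0 as well.
   2. Parametrisation: any two generating characters satisfy chi2 = chi1 (_ * r)
      for some r with x |-> x * r injective (the product chi2 * conj (chi1 (_ * r))
      is trivial for some r, by counting with 1.).
   3. Invariance: the normalized homogeneous weight is invariant under right
      multiplication by such an r (induction on the size of R x, using that w is
      constant on generators of a principal ideal and has fixed average on it).
   Reindexing the block sum by b |-> b * r then gives independence of chi, and
   reindexing by b |-> - b shows that the sum equals its complex conjugate. *)

Section AdditiveCharacter.

Variables (R : finNzRingType) (chi : R -> algC).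
Hypothesis chi_add : is_additive_character chi.

Lemma char_mulN (x : R) : chi x * chi (- x) = 1.
Proof. by case: chi_add => chi0 chiD; rewrite -chiD subrr chi0. Qed.

Lemma char_neq0 (x : R) : chi x != 0.
Proof.
by apply: contra_eq_neq (char_mulN x) => ->; rewrite mul0r eq_sym oner_neq0.
Qed.

(* Each value is a #|R|-th root of unity: compare prod_y chi y with its translate. *)
Lemma char_expR (x : R) : chi x ^+ #|R| = 1.
Proof.
have [_ chiD] := chi_add.
have prod_neq0 : \prod_(y : R) chi y != 0 by apply/prodf_neq0 => y _; exact: char_neq0.
have shift : \prod_(y : R) chi y = chi x ^+ #|R| * \prod_(y : R) chi y.
  rewrite {1}(reindex_inj (addrI x)) /=.
  by under eq_bigr do rewrite chiD; rewrite big_split prodr_const.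
by apply: (mulIf prod_neq0); rewrite mul1r -shift.
Qed.

(* Values have modulus one, so conjugation is inversion, i.e. x |-> - x. *)
Lemma char_conj (x : R) : (chi x)^* = chi (- x).
Proof.
have norm1 : `|chi x| = 1.
  apply/eqP; rewrite -(pexpr_eq1 (n := #|R|)) //; last by apply/card_gt0P; exists x.
  by rewrite -normrX char_expR normr1.
apply: (mulfI (char_neq0 x)).
by rewrite -normCK norm1 expr1n char_mulN.
Qed.

Lemma sum_char_nontrivial (t : R) : chi t != 1 -> \sum_x chi x = 0.
Proof.
have [_ chiD] := chi_add; move=> cht.
have shift : \sum_x chi x = chi t * \sum_x chi x.
  rewrite {1}(reindex_inj (addrI t)) mulr_sumr.
  by apply: eq_bigr => x _; rewrite chiD.
move/eqP: shift; rewrite eq_sym -subr_eq0 -{2}[\sum_x chi x]mul1r -mulrBl.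
by rewrite mulf_eq0 subr_eq0 (negbTE cht) => /eqP.
Qed.

End AdditiveCharacter.

Section PrincipalIdeals.

Variable R : finNzRingType.
Implicit Types x y r : R.

Lemma lprincipal_ideal x : is_left_ideal (lprincipal x).
Proof.
split; first by apply/imsetP; exists 0; rewrite ?mul0r.
split; first by move=> _ _ /imsetP[r _ ->] /imsetP[s _ ->]; apply/imsetP; exists (r + s); rewrite ?mulrDl.
split; first by move=> _ /imsetP[r _ ->]; apply/imsetP; exists (- r); rewrite ?mulNr.
by move=> s _ /imsetP[r _ ->]; apply/imsetP; exists (s * r); rewrite ?mulrA.
Qed.

Lemma mem_lprincipal x : x \in lprincipal x.
Proof. by apply/imsetP; exists 1; rewrite ?mul1r. Qed.

Lemma lprincipal_mulr x r : lprincipal (x * r) = [set y * r | y in lprincipal x].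
Proof. by rewrite /lprincipal -imset_comp; apply: eq_imset => s /=; rewrite mulrA. Qed.

Lemma lprincipal_sub x y : y \in lprincipal x -> lprincipal y \subset lprincipal x.
Proof.
move=> /imsetP[s _ ->]; apply/subsetP=> _ /imsetP[t _ ->].
by apply/imsetP; exists (t * s); rewrite ?mulrA.
Qed.

Lemma generating_lprincipal (chi : R -> algC) x :
  generating_character chi -> {subset lprincipal x <= char_ker chi} -> x = 0.
Proof.
move=> [_ gen] sub.
have Rx0 : lprincipal x = [set 0] by apply: gen; [exact: lprincipal_ideal | exact/subsetP].
by move: (mem_lprincipal x); rewrite Rx0 inE => /eqP.
Qed.

End PrincipalIdeals.

Lemma card_neq0 (R : finNzRingType) : #|R|%:R != 0 :> algC.
Proof. by rewrite pnatr_eq0 -lt0n; apply/card_gt0P; exists 0. Qed.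

Section Orthogonality.

Variables (R : finNzRingType) (chi : R -> algC).
Hypothesis chi_gen : generating_character chi.

Let chi_add : is_additive_character chi := chi_gen.1.

(* Left orthogonality: y |-> chi (y * u) is a nontrivial character when u != 0. *)
Lemma sum_char_mull (u : R) : u != 0 -> \sum_y chi (y * u) = 0.
Proof.
have [chi0 chiD] := chi_add; move=> u_neq0.
have chiu : is_additive_character (fun y => chi (y * u)).
  by split=> [|a b]; rewrite ?mul0r ?mulrDl.
have [/forallP triv | /forallPn [t cht]] := boolP [forall t, chi (t * u) == 1].
  case/eqP: u_neq0; apply: (generating_lprincipal chi_gen) => _ /imsetP[r _ ->].
  by rewrite inE triv.
exact: (sum_char_nontrivial chiu cht).
Qed.

Lemma sum_char_mull_diff (a b : R) :
  \sum_y chi (y * (a - b)) = if a == b then #|R|%:R else 0.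
Proof.
have [chi0 _] := chi_add.
have [->|ab] := eqVneq a b; last by rewrite sum_char_mull // subr_eq0.
by under eq_bigr do rewrite subrr mulr0 chi0; rewrite sumr_const.
Qed.

(* Right orthogonality, deduced from the left one: the character table
   E = (chi (x * y)) has the right inverse F = (#|R|^-1 chi (- x * y)) by the
   left relations, hence F is also a left inverse. *)
Lemma sum_char_mulr (u : R) : u != 0 -> \sum_y chi (u * y) = 0.
Proof.
have [chi0 chiD] := chi_add; move=> u_neq0.
pose n := #|R|.
pose E : 'M[algC]_n := \matrix_(i, j) chi (enum_val j * enum_val i).
pose F : 'M[algC]_n := \matrix_(i, j) (n%:R^-1 * chi (- (enum_val i * enum_val j))).
have EF : E *m F = 1%:M.
  apply/matrixP=> i k; rewrite !mxE.
  under eq_bigr => j _ do rewrite !mxE mulrCA -chiD -mulrBr.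
  rewrite -mulr_sumr -(big_enum_val (fun y => chi (y * (enum_val i - enum_val k)))).
  by rewrite sum_char_mull_diff (inj_eq enum_val_inj); case: eqP; rewrite ?mulr0 ?mulVf ?card_neq0.
have := congr1 (fun M : 'M_n => M (enum_rank 0) (enum_rank u)) (mulmx1C EF).
rewrite !mxE (inj_eq enum_rank_inj) eq_sym (negbTE u_neq0) /=.
under eq_bigr => j _ do rewrite !mxE !enum_rankK -mulrA -chiD mul0r oppr0 add0r.
rewrite -mulr_sumr -(big_enum_val (fun y => chi (u * y))) => /eqP.
by rewrite mulf_eq0 invr_eq0 (negbTE (card_neq0 R)) => /eqP.
Qed.

End Orthogonality.

Lemma generating_character_mulr (R : finNzRingType) (chi1 chi2 : R -> algC) :
  generating_character chi1 -> generating_character chi2 ->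
  exists2 r : R, (forall x, chi2 x = chi1 (x * r)) & injective (fun x => x * r).
Proof.
move=> g1 g2; have [c10 c1D] := g1.1; have [c20 c2D] := g2.1.
pose psi r x := chi2 x * chi1 (- (x * r)).
have psi_add r : is_additive_character (psi r).
  split=> [|a b]; first by rewrite /psi c20 mul0r oppr0 c10 mulr1.
  by rewrite /psi c2D mulrDl opprD c1D mulrACA.
(* Summing psi r over all r and x only keeps x = 0, by right orthogonality. *)
have total : \sum_r \sum_x psi r x = #|R|%:R.
  rewrite exchange_big (bigD1 0) //= [X in _ + X]big1 ?addr0.
    by under eq_bigr do rewrite /psi mul0r oppr0 c20 c10 mulr1; rewrite sumr_const.
  move=> x x_neq0; under eq_bigr do rewrite /psi -mulNr.
  by rewrite -mulr_sumr sum_char_mulr ?mulr0 ?oppr_eq0.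
have [r psi_r] : exists r, \sum_x psi r x != 0.
  apply/existsP; apply: (contraTT _ (card_neq0 R)) => /existsPn psi0.
  by rewrite negbK -total big1 // => r _; exact/eqP/negbNE/psi0.
have psi1 x : psi r x = 1.
  by apply/eqP; apply: contraR psi_r => psi_x; rewrite (sum_char_nontrivial (psi_add r) psi_x).
have chi2E x : chi2 x = chi1 (x * r).
  by rewrite -[chi2 x]mulr1 -(char_mulN g1.1 (x * r)) mulrCA -/(psi r x) psi1 mulr1.
exists r => // a b eq_ab; apply/eqP; rewrite -subr_eq0; apply/eqP.
apply: (generating_lprincipal g2) => _ /imsetP[s _ ->].
by rewrite inE chi2E -mulrA mulrBl eq_ab subrr mulr0 c10.
Qed.

(* By induction on #|R x|: on R x, the terms of
   sum (w (y r) - w y) with R y proper in R x vanish by induction, the others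
   all equal w (x r) - w x, while the whole sum is 0 because both w and
   w (_ * r) have average 1 on R x and on R (x r) = (R x) r. *)
Lemma weight_mulr (R : finNzRingType) (w : R -> rat) (r : R) :
  normalized_homogeneous_weight w -> injective (fun x => x * r) ->
  forall b, w (b * r) = w b.
Proof.
case=> _ w_gen w_avg r_reg.
suff ind n x : (#|lprincipal x| <= n)%N -> w (x * r) = w x by move=> b; exact: ind.
elim: n x => [|n IH] x card_x.
  by move: card_x; rewrite leqn0 => /eqP/card0_eq/(_ x); rewrite mem_lprincipal.
have [->|x_neq0] := eqVneq x 0; first by rewrite mul0r.
have xr_neq0 : x * r != 0.
  by apply: contra_neq x_neq0 => xr0; apply: r_reg; rewrite /= xr0 mul0r.
set G := lprincipal x.
have sum_wr : \sum_(y in G) w (y * r) = #|G|%:R.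
  rewrite -(big_imset (fun z => w z) (in2W r_reg)) /= -lprincipal_mulr w_avg //.
  by rewrite lprincipal_mulr card_imset.
have : \sum_(y in G) (w (y * r) - w y) = 0 by rewrite sumrB sum_wr w_avg ?subrr.
rewrite (bigID (fun y => lprincipal y == G)) /= [X in _ + X]big1 ?addr0; last first.
  move=> y /andP[yG Gy]; apply/eqP; rewrite subr_eq0; apply/eqP/IH.
  have Gy_proper : lprincipal y \proper G by rewrite properEneq Gy lprincipal_sub.
  by rewrite -ltnS (leq_trans (proper_card Gy_proper)).
under eq_bigr => y /andP[_ /eqP Gy].
  rewrite (w_gen (y * r) (x * r)); last by rewrite !lprincipal_mulr Gy.
  rewrite (w_gen y x Gy).
over.
rewrite sumr_const => /eqP; rewrite mulrn_eq0 subr_eq0 => /orP[/eqP/card0_eq/(_ x)|/eqP //].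
by rewrite unfold_in /= mem_lprincipal eqxx.
Qed.

Section BlockSums.

Variables (R : finNzRingType) (T : eqType) (f : R -> T).
Hypothesis f_mulr : forall r : R, injective (fun x => x * r) -> forall b, f (b * r) = f b.

Lemma block_sum_indep (chi1 chi2 : R -> algC) (z a : R) :
  generating_character chi1 -> generating_character chi2 ->
  \sum_(b | f b == f z) chi1 (a * b) = \sum_(b | f b == f z) chi2 (a * b).
Proof.
move=> g1 g2; have [r chi2E r_reg] := generating_character_mulr g1 g2.
rewrite (reindex_inj r_reg) /=.
by apply: eq_big => [b|b _]; rewrite ?f_mulr // chi2E mulrA.
Qed.

(* The block is stable under b |-> - b, which realises complex conjugation. *)
Lemma block_sum_real (chi : R -> algC) (z a : R) :
  is_additive_character chi -> \sum_(b | f b == f z) chi (a * b) \is Num.real.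
Proof.
move=> chi_add; have N1_reg : injective (fun x : R => x * -1).
  by move=> u v /=; rewrite !mulrN1 => /oppr_inj.
apply/CrealP; rewrite rmorph_sum /= [RHS](reindex_inj N1_reg) /=.
by apply: eq_big => [b|b _]; rewrite ?f_mulr // char_conj // mulrN1 mulrN.
Qed.

End BlockSums.

Theorem mainTheorem2 (R : finNzRingType) (hF : frobenius_ring R)
    (w : R -> rat) (hw : normalized_homogeneous_weight w) :
  (forall (z a : R) (chi1 chi2 : R -> algC),
      generating_character chi1 -> generating_character chi2 ->
      \sum_(b : R | w b == w z) chi1 (a * b)
        = \sum_(b : R | w b == w z) chi2 (a * b)
      /\ (\sum_(b : R | w b == w z) chi1 (a * b)) \is Num.real)
  /\
  (forall chi1 chi2 : R -> algC,
      generating_character chi1 -> generating_character chi2 ->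
      forall x y : R, right_dual_rel w chi1 x y <-> right_dual_rel w chi2 x y).
Proof.
have w_mulr r : injective (fun x => x * r) -> forall b, w (b * r) = w b.
  exact: weight_mulr hw.
have indep := block_sum_indep w_mulr.
split=> [z a chi1 chi2 g1 g2 | chi1 chi2 g1 g2 x y].
  by split; [exact: indep | exact: block_sum_real w_mulr _ _ _ g1.1].
rewrite /right_dual_rel; split=> dual z.
  by rewrite -!(indep chi1 chi2 z _ g1 g2).
by rewrite !(indep chi1 chi2 z _ g1 g2).
Qed.
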